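(* Let $A$ be a 2-sided residuated $\vee$-semilattice, let $F$ be a filter of $A$ and let $a\in A$ with $a\notin F$. Then there exists a $\vee$-prime filter $G$ of $A$ such that $F\subseteq G$ and $a\notin G$.
   Context: A residuated poset is a partially ordered semigroup $(A;\cdot,\le)$ with binary operations $\to,\leadsto$ such that $x\cdot y\le z$ iff $x\le y\to z$ iff $y\le x\leadsto z$ for all $x,y,z$. It is 2-sided if $x\cdot y\le x$ and $x\cdot y\le y$ for all $x,y$. It is a residuated $\vee$-semilattice if $(A,\le)$ is a join-semilattice. A filter of $A$ is a nonempty subset that is upward closed and closed under $\cdot$. A filter $G$ is $\vee$-prime if $x\vee y\in G$ implies $x\in G$ or $y\in G$. *)

Record ResJoinSemilattice := {
  carrier :> Type;
  le : carrier -> carrier -> Prop;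
  mul : carrier -> carrier -> carrier;
  rimp : carrier -> carrier -> carrier;
  limp : carrier -> carrier -> carrier;
  join : carrier -> carrier -> carrier;
  le_refl : forall x, le x x;
  le_antisym : forall x y, le x y -> le y x -> x = y;
  le_trans : forall x y z, le x y -> le y z -> le x z;
  mul_assoc : forall x y z, mul x (mul y z) = mul (mul x y) z;
  mul_mono : forall x y u v, le x y -> le u v -> le (mul x u) (mul y v);
  resid_r : forall x y z, le (mul x y) z <-> le x (rimp y z);
  resid_l : forall x y z, le (mul x y) z <-> le y (limp x z);
  join_ub_l : forall x y, le x (join x y);
  join_ub_r : forall x y, le y (join x y);
  join_lub : forall x y z, le x z -> le y z -> le (join x y) z
}.

Definition two_sided (A : ResJoinSemilattice) : Prop :=
  forall x y : A, le A (mul A x y) x /\ le A (mul A x y) y.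

Definition is_filter (A : ResJoinSemilattice) (F : A -> Prop) : Prop :=
  (exists x, F x) /\
  (forall x y, F x -> le A x y -> F y) /\
  (forall x y, F x -> F y -> F (mul A x y)).

Definition join_prime (A : ResJoinSemilattice) (G : A -> Prop) : Prop :=
  forall x y, G (join A x y) -> G x \/ G y.

(* Zorn's lemma yields a filter M containing F and maximal among the filters
   avoiding a.  If x ⊔ y ∈ M but x, y ∉ M, maximality puts a into the filters
   generated by M with x and by M with y, so (h x)^m ≤ a and (h y)^n ≤ a for
   one h ∈ M.  Since h (x ⊔ y) ≤ h x ⊔ h y, and in a 2-sided algebra
   (u ⊔ v)^(m+n-1) ≤ a whenever u^m ≤ a and v^n ≤ a, the element
   (h (x ⊔ y))^(m+n-1) of M lies below a: a contradiction. *)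

From mathcomp Require Import ssreflect ssrfun ssrbool ssrnat boolp classical_sets.

Set Implicit Arguments.
Unset Strict Implicit.

Local Open Scope classical_set_scope.

#[local] Arguments le_trans {r x y z}.
#[local] Arguments mul_mono {r x y u v}.

Section Residuated.

Variable A : ResJoinSemilattice.

Local Notation "x ⊑ y" := (le A x y) (at level 70).
Local Notation "x ⋅ y" := (mul A x y) (at level 40, left associativity).
Local Notation "x ⊔ y" := (join A x y) (at level 50, left associativity).

(* [spow x n] is x^(n+1): a semigroup has no unit to serve as x^0. *)
Fixpoint spow (x : A) (n : nat) : A :=
  if n is n'.+1 then x ⋅ spow x n' else x.

Lemma spow_mono (x y : A) (n : nat) : x ⊑ y -> spow x n ⊑ spow y n.
Proof. by move=> lexy; elim: n => //= n IHn; apply: mul_mono. Qed.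

Lemma spow_addS (x : A) (m n : nat) : spow x (m + n).+1 = spow x m ⋅ spow x n.
Proof. by elim: m => //= m IHm; rewrite IHm mul_assoc. Qed.

Lemma filter_spow (G : set A) (x : A) (n : nat) :
  is_filter A G -> G x -> G (spow x n).
Proof. by move=> [_ [_ Gmul]] Gx; elim: n => //= n; apply: Gmul. Qed.

Lemma mul_joinr_le (x y z : A) : x ⋅ (y ⊔ z) ⊑ x ⋅ y ⊔ x ⋅ z.
Proof.
by apply/resid_l/join_lub; apply/resid_l; [apply: join_ub_l | apply: join_ub_r].
Qed.

Lemma filter_setU_bigcup (F : set A) (C : set (set A)) :
  is_filter A F -> (forall X, C X -> is_filter A (F `|` X)) ->
  total_on C subset -> is_filter A (F `|` \bigcup_(X in C) X).
Proof.
move=> [[f Ff] [Fup Fmul]] filterC totC.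
set U := F `|` \bigcup_(X in C) X.
have sub_U X : C X -> F `|` X `<=` U by move=> CX y [Fy|Xy]; [left | right; exists X].
have common x y : U x -> U y ->
    F x /\ F y \/ exists2 X, C X & (F `|` X) x /\ (F `|` X) y.
  move=> [Fx|[X CX Xx]] [Fy|[Y CY Yy]]; first (by left); right.
  - by exists Y; [|split; [left | right]].
  - by exists X; [|split; [right | left]].
  - have [XY|YX] := totC X Y CX CY.
      by exists Y; [|split; right; [apply: XY|]].
    by exists X; [|split; right; [|apply: YX]].
split; first by exists f; left.
split=> [x y [Fx|[X CX Xx]] lexy | x y Ux Uy].
- by left; apply: Fup lexy.
- by have [_ [Xup _]] := filterC X CX; apply/(sub_U X CX)/(Xup x); first right.
- have [[Fx Fy] | [X CX [Xx Xy]]] := common x y Ux Uy; first by left; apply: Fmul.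
  by have [_ [_ Xmul]] := filterC X CX; apply/(sub_U X CX)/Xmul.
Qed.

Definition maximal_avoiding (a : A) (M : set A) : Prop :=
  [/\ is_filter A M, ~ M a &
      forall G, is_filter A G -> M `<=` G -> ~ G a -> G `<=` M].

Lemma exists_maximal_avoiding (F : set A) (a : A) :
  is_filter A F -> ~ F a -> exists2 M, F `<=` M & maximal_avoiding a M.
Proof.
move=> filterF Fa.
(* Zorn_bigcup also bounds the empty chain, so we order the sets X with
   F `|` X a filter rather than the filters themselves. *)
pose P X := is_filter A (F `|` X) /\ ~ (F `|` X) a.
have [X [[filterFX FXa] maxX]] : exists X, P X /\ forall Y, X `<` Y -> ~ P Y.
  apply: Zorn_bigcup => C CP totC; split.
    by apply: filter_setU_bigcup => // Y /CP[].
  by move=> [Fa' | [Y /CP[_ FYa] Ya]]; [apply: Fa | apply: FYa; right].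
exists (F `|` X); first exact: subsetUl.
split=> // G filterG FXG Ga y Gy; apply: contrapT => FXy.
have XG : X `<=` G by move=> x Xx; apply: FXG; right.
apply: (maxX G); first by split=> // GX; apply: FXy; right; apply: GX.
by rewrite /P setUidr // => x Fx; apply: FXG; left.
Qed.

Hypothesis two_sidedA : two_sided A.

Lemma mul_le_l (x y : A) : x ⋅ y ⊑ x. Proof. exact: (two_sidedA x y).1. Qed.
Lemma mul_le_r (x y : A) : x ⋅ y ⊑ y. Proof. exact: (two_sidedA x y).2. Qed.

Lemma le_limp (x z : A) : z ⊑ limp A x z.
Proof. exact/resid_l/mul_le_r. Qed.

(* Every word of length m+n+1 in u and v has at least m+1 letters u or at
   least n+1 letters v, and 2-sidedness lets the other letters be dropped. *)
Lemma spow_join_le (u v z : A) (m n : nat) :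
  spow u m ⊑ z -> spow v n ⊑ z -> spow (u ⊔ v) (m + n) ⊑ z.
Proof.
have [k mnk] : {k | k = m + n} by exists (m + n).
rewrite -mnk; elim: k m n z mnk => [|k IHk] m n z.
  by case: m n => [|//] [|//] _ /= leuz levz; apply: join_lub.
move=> mnk leuz levz /=; apply/resid_r/join_lub; apply/resid_r/resid_l.
- case: m mnk leuz => [_ leuz | m mnk /resid_l leuz].
    by apply/resid_l/(le_trans (mul_le_l _ _) leuz).
  apply: (IHk m n) => //; first by case: mnk.
  exact: le_trans levz (le_limp _ _).
- case: n mnk levz => [_ levz | n mnk /resid_l levz].
    by apply/resid_l/(le_trans (mul_le_l _ _) levz).
  apply: (IHk m n) => //; first by move: mnk; rewrite addnS => -[].
  exact: le_trans leuz (le_limp _ _).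
Qed.

Lemma spow_mul_le_l (h h' x : A) (n : nat) : spow (h ⋅ h' ⋅ x) n ⊑ spow (h ⋅ x) n.
Proof. by apply/spow_mono/mul_mono; [apply: mul_le_l | apply: le_refl]. Qed.

Lemma spow_mul_le_r (h h' x : A) (n : nat) : spow (h ⋅ h' ⋅ x) n ⊑ spow (h' ⋅ x) n.
Proof. by apply/spow_mono/mul_mono; [apply: mul_le_r | apply: le_refl]. Qed.

(* For nonempty G, the filter generated by G and x (using 2-sidedness). *)
Definition adjoin (G : set A) (x : A) : set A :=
  [set y | exists h n, G h /\ spow (h ⋅ x) n ⊑ y].

Lemma sub_adjoin (G : set A) (x : A) : G `<=` adjoin G x.
Proof. by move=> y Gy; exists y, 0; split=> //; apply: mul_le_l. Qed.

Lemma adjoin_self (G : set A) (x : A) : is_filter A G -> adjoin G x x.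
Proof. by move=> [[h Gh] _]; exists h, 0; split=> //; apply: mul_le_r. Qed.

Lemma filter_adjoin (G : set A) (x : A) : is_filter A G -> is_filter A (adjoin G x).
Proof.
move=> filterG; have [_ [_ Gmul]] := filterG.
split; first by exists x; apply: adjoin_self.
split=> [y z [h [n [Gh leyh]]] leyz | y z [h [m [Gh lehy]]] [h' [n [Gh' leh'z]]]].
  by exists h, n; split=> //; apply: le_trans leyh leyz.
exists (h ⋅ h'), (m + n).+1; split; first exact: Gmul.
rewrite spow_addS; apply: mul_mono.
  exact: le_trans (spow_mul_le_l _ _ _ _) lehy.
exact: le_trans (spow_mul_le_r _ _ _ _) leh'z.
Qed.

Lemma maximal_avoiding_adjoin (a : A) (M : set A) (x : A) :
  maximal_avoiding a M -> ~ M x -> adjoin M x a.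
Proof.
move=> [filterM _ maxM] Mx; apply: contrapT => adjoin_a; apply: Mx.
apply: (maxM (adjoin M x)) => //; [exact: filter_adjoin | exact: sub_adjoin |].
exact: adjoin_self.
Qed.

Lemma maximal_avoiding_join_prime (a : A) (M : set A) :
  maximal_avoiding a M -> join_prime A M.
Proof.
move=> maxM x y Mxy; have [filterM Ma _] := maxM; have [_ [Mup Mmul]] := filterM.
have [Mx|Mx] := pselect (M x); [by left | right].
apply: contrapT => My; apply: Ma.
have [h [m [Mh lehx]]] := maximal_avoiding_adjoin maxM Mx.
have [h' [n [Mh' leh'y]]] := maximal_avoiding_adjoin maxM My.
have Mhh' : M (h ⋅ h') by apply: Mmul.
apply: (Mup _ _ (filter_spow (m + n) filterM (Mmul _ _ Mhh' Mxy))).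
apply: le_trans (spow_mono _ (mul_joinr_le _ _ _)) _.
apply: spow_join_le.
  exact: le_trans (spow_mul_le_l _ _ _ _) lehx.
exact: le_trans (spow_mul_le_r _ _ _ _) leh'y.
Qed.

End Residuated.

Theorem theorem5p5 (A : ResJoinSemilattice) (HA : two_sided A)
  (F : A -> Prop) (a : A) (HF : is_filter A F) (Ha : ~ F a) :
  exists G : A -> Prop,
    is_filter A G /\ join_prime A G /\ (forall x, F x -> G x) /\ ~ G a.
Proof.
have [M FM maxM] := exists_maximal_avoiding HF Ha.
have [filterM Ma _] := maxM.
by exists M; split; [|split; [exact: maximal_avoiding_join_prime maxM|]].
Qed.
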